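(* Let $k=\mathbb{R}$ or $\mathbb{C}$, let $(V,g)$ be an inner product vector space over $k$, and let $f\in\operatorname{End}_k(V)$ be admissible for the Moore-Penrose inverse. Let $\mathcal H_f=\{H_i\}_{i\in I}$ be a family of finite-dimensional $f$-invariant subspaces of $V$ with $V=\bigoplus_{i\in I}H_i$, and write $f_i=f|_{H_i}$. Then $f^+_{\mathcal H_f}=f^\dagger$ if and only if the following two conditions hold: (1) $[\operatorname{Im} f_i]_i^\perp\subseteq\big[\sum_{j\ne i}\operatorname{Im} f_j\big]^\perp$ for every $i\in I$; (2) $[\operatorname{Ker} f_i]_i^\perp\subseteq\big[\sum_{j\ne i}\operatorname{Ker} f_j\big]^\perp$ for every $i\in I$.
   Context: An inner product $g$ on a $k$-vector space is linear in the first argument, conjugate-symmetric and positive definite; $U^\perp=\{v\in V:g(u,v)=0\ \forall u\in U\}$. $V=\bigoplus_{i\in I}H_i$ means the natural map $\bigoplus_{i\in I} H_i\to V$, $(v_i)\mapsto\sum v_i$, is an isomorphism. A linear map $f\colon V\to W$ between inner product spaces is admissible for the Moore-Penrose inverse if $V=\operatorname{Ker} f\oplus[\operatorname{Ker} f]^\perp$ and $W=\operatorname{Im} f\oplus[\operatorname{Im} f]^\perp$; its Moore-Penrose inverse $f^\dagger\colon W\to V$ is the linear map equal to $(f|_{[\operatorname{Ker} f]^\perp})^{-1}$ on $\operatorname{Im} f$ and to $0$ on $[\operatorname{Im} f]^\perp$ (equivalently, the unique reflexive generalized inverse $f^\dagger$ of $f$ with $f^\dagger\circ f$ and $f\circ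 f^\dagger$ self-adjoint). For a subspace $U\subseteq H_i$, $[U]_i^\perp=\{v\in H_i: g(u,v)=0\ \forall u\in U\}$. Each $f_i\in\operatorname{End}_k(H_i)$ with $H_i$ carrying the restricted inner product has a Moore-Penrose inverse $f_i^\dagger$ (as $H_i$ is finite-dimensional). The reflexive generalized inverse of $f$ associated with $\mathcal H_f$ is the unique linear map $f^+_{\mathcal H_f}\in\operatorname{End}_k(V)$ with $f^+_{\mathcal H_f}|_{H_i}=f_i^\dagger$ for every $i\in I$. *)

From mathcomp Require Import all_boot all_algebra.
From mathcomp Require Import reals.
From mathcomp.real_closed Require Import complex.
From Stdlib Require List.
Set Implicit Arguments. Unset Strict Implicit. Unset Printing Implicit Defensive.
Import GRing.Theory Num.Theory.
Local Open Scope ring_scope.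

Section InnerProductSpaces.
Variables (k : numFieldType) (conj : k -> k) (V : lmodType k).

Definition inner_product (g : V -> V -> k) : Prop :=
  [/\ (forall a u u' v, g (a *: u + u') v = a * g u v + g u' v),
      (forall u v, g u v = conj (g v u)) &
      (forall v, v != 0 -> 0 < g v v)].

Definition subspace (U : V -> Prop) : Prop :=
  [/\ U 0, (forall u v, U u -> U v -> U (u + v)) &
      (forall (a : k) u, U u -> U (a *: u))].

Definition orth (g : V -> V -> k) (U : V -> Prop) : V -> Prop :=
  fun v => forall u, U u -> g u v = 0.

Definition orth_in (g : V -> V -> k) (Hi U : V -> Prop) : V -> Prop :=
  fun v => Hi v /\ forall u, U u -> g u v = 0.

Definition direct_sum2 (A B : V -> Prop) : Prop :=
  (forall v, exists a b, [/\ A a, B b & v = a + b]) /\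
  (forall a b, A a -> B b -> a + b = 0 -> a = 0 /\ b = 0).

(* V = (+)_{i in I} H_i : the natural map from the external direct sum
   (finitely supported families (v_i), v_i in H_i) to V, (v_i) |-> sum v_i,
   is bijective. Finitely supported families are given by a duplicate-free
   list s of indices and values w i (i in s). *)
Definition direct_sum_family (I : Type) (H : I -> V -> Prop) : Prop :=
  (forall v, exists (s : seq I) (w : I -> V),
      (forall i, H i (w i)) /\ v = \sum_(i <- s) w i) /\
  (forall (s : seq I) (w : I -> V), List.NoDup s ->
      (forall i, List.In i s -> H i (w i)) ->
      \sum_(i <- s) w i = 0 -> forall i, List.In i s -> w i = 0).

Definition fin_dim (U : V -> Prop) : Prop :=
  exists s : seq V, forall v,
    U v <-> exists c : 'I_(size s) -> k, v = \sum_(j < size s) c j *: s`_j.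

Definition invariant (f : V -> V) (U : V -> Prop) : Prop :=
  forall v, U v -> U (f v).

Definition Ker (f : V -> V) : V -> Prop := fun v => f v = 0.
Definition Im (f : V -> V) : V -> Prop := fun w => exists v, w = f v.

Definition Ker_on (f : V -> V) (Hi : V -> Prop) : V -> Prop :=
  fun v => Hi v /\ f v = 0.
Definition Im_on (f : V -> V) (Hi : V -> Prop) : V -> Prop :=
  fun w => exists v, Hi v /\ w = f v.

Definition sum_except (I : Type) (U : I -> V -> Prop) (i : I) : V -> Prop :=
  fun w => exists (s : seq I) (u : I -> V),
    [/\ (forall j, List.In j s -> j <> i),
        (forall j, List.In j s -> U j (u j)) &
        w = \sum_(j <- s) u j].

Definition included (A B : V -> Prop) : Prop := forall v, A v -> B v.

Definition MP_admissible (g : V -> V -> k) (f : V -> V) : Prop :=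
  direct_sum2 (Ker f) (orth g (Ker f)) /\ direct_sum2 (Im f) (orth g (Im f)).

(* h is the Moore-Penrose inverse f^dagger of f: h is (f|_{Ker f^perp})^{-1}
   on Im f and 0 on (Im f)^perp *)
Definition is_MP_inverse (g : V -> V -> k) (f h : V -> V) : Prop :=
  (forall v, orth g (Ker f) v -> h (f v) = v) /\
  (forall w, orth g (Im f) w -> h w = 0).

(* h restricted to H_i equals the Moore-Penrose inverse f_i^dagger of
   f_i = f|_{H_i} on H_i (with the restricted inner product): it is
   (f_i|_{[Ker f_i]_i^perp})^{-1} on Im f_i and 0 on [Im f_i]_i^perp *)
Definition restricts_to_MP_on (g : V -> V -> k) (f h : V -> V)
    (Hi : V -> Prop) : Prop :=
  (forall v, orth_in g Hi (Ker_on f Hi) v -> h (f v) = v) /\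
  (forall w, orth_in g Hi (Im_on f Hi) w -> h w = 0).

Definition is_assoc_inverse (g : V -> V -> k) (f h : V -> V)
    (I : Type) (H : I -> V -> Prop) : Prop :=
  forall i, restricts_to_MP_on g f h (H i).

End InnerProductSpaces.

Definition Theorem_3_20_over (k : numFieldType) (conj : k -> k) : Prop :=
  forall (V : lmodType k) (g : V -> V -> k) (f : {linear V -> V})
         (I : Type) (H : I -> V -> Prop) (fdag fplus : {linear V -> V}),
    inner_product conj g ->
    MP_admissible g f ->
    (forall i, subspace (H i)) ->
    (forall i, fin_dim (H i)) ->
    (forall i, invariant f (H i)) ->
    direct_sum_family H ->
    is_MP_inverse g f fdag ->
    is_assoc_inverse g f fplus H ->
    (fplus =1 fdag <->
       ((forall i, included (orth_in g (H i) (Im_on f (H i)))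
                            (orth g (sum_except (fun j => Im_on f (H j)) i)))
     /\ (forall i, included (orth_in g (H i) (Ker_on f (H i)))
                            (orth g (sum_except (fun j => Ker_on f (H j)) i))))).

(* A map with the two Moore-Penrose properties is unique, so f^+ = f^dagger
   iff f^+ vanishes on (Im f)^perp and inverts f on (Ker f)^perp.  Take x in
   (Im f)^perp (resp. (Ker f)^perp), write it as a sum of x_j in H_j and split
   each x_j = a_j + b_j orthogonally inside the finite-dimensional H_j, with
   a_j in Im f_j (resp. Ker f_j).  Condition (1) (resp. (2)) makes every b_j
   orthogonal to every a_l, so a = sum a_j lies in Im f (resp. Ker f) and is
   orthogonal to x - a; hence a = 0 and x = sum b_j, on which f^+ acts
   componentwise as f^dagger should.  Conversely, if f^+ = f^dagger then
   f^+ q = 0 forces q into (Im f)^perp and f^+ (f q) = q forces q into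
   (Ker f)^perp. *)
From Pilot Require Import Defs.
From mathcomp Require Import all_boot all_algebra.
From mathcomp Require Import reals.
From mathcomp.real_closed Require Import complex.
From Stdlib Require Import Classical IndefiniteDescription.
Set Implicit Arguments. Unset Strict Implicit. Unset Printing Implicit Defensive.
Import GRing.Theory Num.Theory.
Local Open Scope ring_scope.

Section Subspaces.
Variables (k : numFieldType) (V : lmodType k).

Lemma subspaceB (U : V -> Prop) u v : subspace U -> U u -> U v -> U (u - v).
Proof. by case=> _ UD UZ Uu Uv; rewrite -scaleN1r; apply/UD/UZ. Qed.

Lemma subspace_sum (U : V -> Prop) (I : Type) (s : seq I) (F : I -> V) :
  subspace U -> (forall j, U (F j)) -> U (\sum_(j <- s) F j).
Proof. by case=> U0 UD _ UF; apply: big_ind. Qed.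

Lemma subspaceI (U W : V -> Prop) :
  subspace U -> subspace W -> subspace (fun v => U v /\ W v).
Proof.
case=> U0 UD UZ [W0 WD WZ].
by split=> [|u v [Uu Wu] [Uv Wv]|a u [Uu Wu]]; split; auto.
Qed.

Lemma Im_subspace (f : {linear V -> V}) : subspace (Defs.Im f).
Proof.
split; first by exists 0; rewrite linear0.
  by move=> _ _ [u ->] [v ->]; exists (u + v); rewrite linearD.
by move=> a _ [u ->]; exists (a *: u); rewrite linearZ.
Qed.

Lemma Ker_subspace (f : {linear V -> V}) : subspace (Ker f).
Proof.
split; first exact: linear0.
  by move=> u v fu fv; rewrite /Ker linearD fu fv addr0.
by move=> a u fu; rewrite /Ker linearZ /= fu scaler0.
Qed.

Lemma Im_on_subspace (f : {linear V -> V}) Hs :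
  subspace Hs -> subspace (Im_on f Hs).
Proof.
case=> H0 HD HZ; split; first by exists 0; rewrite linear0.
  move=> _ _ [u [Hu ->]] [v [Hv ->]].
  by exists (u + v); rewrite linearD; split; first exact: HD.
by move=> a _ [u [Hu ->]]; exists (a *: u); rewrite linearZ; split; first exact: HZ.
Qed.

Lemma Ker_on_subspace (f : {linear V -> V}) Hs :
  subspace Hs -> subspace (Ker_on f Hs).
Proof. by move=> HsS; apply: subspaceI HsS (Ker_subspace f). Qed.

Fixpoint in_span (s : seq V) : V -> Prop :=
  match s with
  | [::] => fun v => v = 0
  | x :: t => fun v => exists a w, in_span t w /\ v = a *: x + w
  end.

Lemma in_span_subspace s : subspace (in_span s).
Proof.
elim: s => [|x s [h0 hD hZ]] /=; split.
- by [].
- by move=> u v -> ->; rewrite addr0.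
- by move=> a u ->; rewrite scaler0.
- by exists 0, 0; rewrite scale0r addr0.
- move=> _ _ [a [u [su ->]]] [b [v [sv ->]]].
  by exists (a + b), (u + v); rewrite scalerDl addrACA; split; first exact: hD.
- move=> c _ [a [u [su ->]]].
  by exists (c * a), (c *: u); rewrite scalerDr scalerA; split; first exact: hZ.
Qed.

Lemma fin_dim_in_span U : fin_dim U -> exists s, included U (in_span s).
Proof.
case=> s Us; exists s => _ /Us [c ->].
elim: s c {Us} => [|x s IHs] c /=; first by rewrite big_ord0.
by rewrite big_ord_recl; eexists (c ord0), _; split; first exact: (IHs (c \o lift ord0)).
Qed.

Lemma subspace_of_span_spanned s (U : V -> Prop) :
  subspace U -> included U (in_span s) -> exists t, forall u, U u <-> in_span t u.
Proof.
elim: s U => [|x s IHs] U US Us.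
  by exists [::] => u; split=> [/Us // | /= ->]; case: US.
have [U0 UD UZ] := US; have [_ _ sZ] := in_span_subspace s.
have [t' U't'] := IHs _ (subspaceI US (in_span_subspace s)) (fun u => @proj2 _ _).
have [[u0 [Uu0 su0]] | U_s] :=
  classic (exists u0, U u0 /\ ~ in_span s u0); last first.
  exists t' => u; rewrite -U't'; split=> [Uu | []//].
  by split=> //; apply: NNPP => su; apply: U_s; exists u.
have [a [w0 [sw0 u0E]]] := Us u0 Uu0.
have a0 : a != 0 by apply: contra_notN su0 => /eqP a0; rewrite u0E a0 scale0r add0r.
exists (u0 :: t') => u; split; last first.
  by case=> [c [r [/U't' [Ur _] ->]]]; apply/UD/Ur/UZ.
move=> Uu; have [b [w [sw uE]]] := Us u Uu.
exists (b / a), (u - (b / a) *: u0); split; last by rewrite addrC subrK.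
apply/U't'; split; first by apply: subspaceB => //; apply: UZ.
rewrite [u in u - _]uE u0E scalerDr scalerA divfK // opprD addrACA subrr add0r.
exact: subspaceB (in_span_subspace s) sw (sZ _ _ sw0).
Qed.

End Subspaces.

Section InnerProduct.
Variables (k : numFieldType) (conj : {rmorphism k -> k}) (V : lmodType k).
Variable g : V -> V -> k.
Hypothesis hg : inner_product conj g.

Lemma ipDl u u' v : g (u + u') v = g u v + g u' v.
Proof. by case: hg => lin _ _; rewrite -[u]scale1r lin mul1r scale1r. Qed.

Lemma ip0l v : g 0 v = 0.
Proof. by apply: (addrI (g 0 v)); rewrite -ipDl !addr0. Qed.

Lemma ipZl a u v : g (a *: u) v = a * g u v.
Proof. by case: hg => lin _ _; rewrite -[a *: u]addr0 lin ip0l addr0. Qed.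

Lemma ipBl u u' v : g (u - u') v = g u v - g u' v.
Proof. by rewrite ipDl -scaleN1r ipZl mulN1r. Qed.

Lemma ip_sym u v : g u v = conj (g v u).
Proof. by case: hg. Qed.

Lemma ip0r u : g u 0 = 0.
Proof. by rewrite ip_sym ip0l rmorph0. Qed.

Lemma ipDr u v v' : g u (v + v') = g u v + g u v'.
Proof. by rewrite ip_sym ipDl rmorphD -!ip_sym. Qed.

Lemma ipZr a u v : g u (a *: v) = conj a * g u v.
Proof. by rewrite ip_sym ipZl rmorphM -ip_sym. Qed.

Lemma ipBr u v v' : g u (v - v') = g u v - g u v'.
Proof. by rewrite ipDr -scaleN1r ipZr rmorphN1 mulN1r. Qed.

Lemma ip_suml (I : Type) (s : seq I) (F : I -> V) v :
  g (\sum_(j <- s) F j) v = \sum_(j <- s) g (F j) v.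
Proof. by elim: s => [|x s IHs]; rewrite ?big_nil ?ip0l // !big_cons ipDl IHs. Qed.

Lemma ip_sumr (I : Type) (s : seq I) (F : I -> V) v :
  g v (\sum_(j <- s) F j) = \sum_(j <- s) g v (F j).
Proof. by elim: s => [|x s IHs]; rewrite ?big_nil ?ip0r // !big_cons ipDr IHs. Qed.

Lemma ip_eq0 v : g v v = 0 -> v = 0.
Proof.
move=> vv0; apply: contra_eq vv0; case: hg => _ _ pos /pos.
by rewrite lt0r => /andP[].
Qed.

Lemma orth_sum_exceptP (I : Type) (U : I -> V -> Prop) i b :
  orth g (sum_except U i) b <-> (forall j, j <> i -> forall u, U j u -> g u b = 0).
Proof.
split=> [bU j ji u Uu | bU _ [s [u [s_i sU ->]]]].
  by apply: bU; exists [:: j], (fun=> u); rewrite big_seq1; split=> // l [<-|[]].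
elim: s s_i sU => [|x s IHs] s_i sU; first by rewrite big_nil ip0l.
rewrite big_cons ipDl (bU x (s_i x (or_introl erefl)) _ (sU x (or_introl erefl))) add0r.
by apply: IHs => l sl; [apply: s_i | apply: sU]; right.
Qed.

(* Gram-Schmidt: correct the projection av of v along y' = y - ay, the part
   of y orthogonal to span t (if y' = 0, the junk value x / 0 = 0 gives c = 0). *)
Lemma in_span_orth_proj t v : exists a, in_span t a /\ orth g (in_span t) (v - a).
Proof.
elim: t v => [|y t IHt] v; first by exists 0; split=> // _ ->; rewrite ip0l.
have [ay [t_ay y_orth]] := IHt y; have [av [t_av v_orth]] := IHt v.
set y' := y - ay; set v' := v - av; pose c := g v' y' / g y' y'.
have v'y' : g y' (v' - c *: y') = 0.
  rewrite ip_sym; have [->|y'0] := eqVneq y' 0; first by rewrite ip0r rmorph0.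
  have : g y' y' != 0 by case: hg => _ _ /(_ _ y'0) /lt0r_neq0.
  by move=> yy0; rewrite ipBl ipZl divfK // subrr rmorph0.
have t_orth u : in_span t u -> g u (v' - c *: y') = 0.
  by move=> tu; rewrite ipBr ipZr v_orth // y_orth // mulr0 subr0.
exists (av + c *: y'); split.
  exists c, (av - c *: ay); rewrite /y' scalerBr addrCA; split=> //.
  have [_ _ tZ] := in_span_subspace t.
  exact: subspaceB (in_span_subspace t) t_av (tZ _ _ t_ay).
have -> : v - (av + c *: y') = v' - c *: y' by rewrite opprD addrA.
move=> _ [b [u [tu ->]]]; rewrite ipDl ipZl (t_orth u tu) addr0.
by rewrite -(subrK ay y) ipDl v'y' (t_orth ay t_ay) addr0 mulr0.
Qed.

Lemma orth_in_decomposition (Hs U : V -> Prop) :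
  subspace Hs -> fin_dim Hs -> subspace U -> included U Hs ->
  forall v, Hs v -> exists a b, [/\ U a, orth_in g Hs U b & v = a + b].
Proof.
move=> HsS /fin_dim_in_span [s Hs_s] US UHs v Hv.
have [t Ut] := subspace_of_span_spanned US (fun u Uu => Hs_s u (UHs u Uu)).
have [a [ta a_orth]] := in_span_orth_proj t v.
exists a, (v - a); split; [exact/Ut | split | by rewrite addrC subrK].
  by apply: subspaceB => //; apply/UHs/Ut.
by move=> u /Ut; apply: a_orth.
Qed.

Section Components.
Variables (I : Type) (H : I -> V -> Prop).
Hypotheses (H_sub : forall j, subspace (H j)) (H_fd : forall j, fin_dim (H j)).

Definition orth_compatible (U : I -> V -> Prop) : Prop :=
  forall i, included (orth_in g (H i) (U i)) (orth g (sum_except U i)).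

Lemma orth_sum_components (U : I -> V -> Prop) (W : V -> Prop) :
  (forall j, subspace (U j)) -> (forall j, included (U j) (H j)) ->
  orth_compatible U -> subspace W -> (forall j, included (U j) W) ->
  forall (s : seq I) (x : I -> V), (forall j, H j (x j)) ->
  orth g W (\sum_(j <- s) x j) ->
  exists b, (forall j, orth_in g (H j) (U j) (b j)) /\
            \sum_(j <- s) x j = \sum_(j <- s) b j.
Proof.
move=> U_sub UH U_orth WS UW s x Hx x_orth.
have x_split j : exists ab : V * V,
    [/\ U j ab.1, orth_in g (H j) (U j) ab.2 & x j = ab.1 + ab.2].
  have [a [b abP]] := orth_in_decomposition (H_sub j) (H_fd j) (U_sub j) (UH j) (Hx j).
  by exists (a, b).
have [ab abP] := functional_choice _ x_split.
pose a j := (ab j).1; pose b j := (ab j).2.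
have [Ua b_orth xE] : [/\ forall j, U j (a j), forall j, orth_in g (H j) (U j) (b j)
  & forall j, x j = a j + b j] by split=> j; case: (abP j).
have ab_orth l j : g (a l) (b j) = 0.
  have [<-|lj] := classic (l = j); first exact: (b_orth l).2.
  exact: (proj1 (orth_sum_exceptP _ _ _) (U_orth j _ (b_orth j)) l lj).
have sum_a0 : \sum_(j <- s) a j = 0.
  apply: ip_eq0; rewrite -[X in g _ X](addrK (\sum_(j <- s) b j)).
  rewrite -big_split /= -(eq_bigr _ (fun j _ => xE j)) ipBr x_orth; last first.
    by apply: subspace_sum => // j; apply/UW/Ua.
  rewrite ip_suml big1 ?subrr // => l _.
  by rewrite ip_sumr big1 // => j _; apply: ab_orth.
exists b; split=> //.
by rewrite (eq_bigr _ (fun j _ => xE j)) big_split /= sum_a0 add0r.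
Qed.

End Components.
End InnerProduct.

Section MoorePenrose.
Variables (k : numFieldType) (V : lmodType k) (g : V -> V -> k).
Variable f : {linear V -> V}.
Hypothesis f_adm : MP_admissible g f.

Lemma MP_inverse_eq0 (h : {linear V -> V}) w :
  is_MP_inverse g f h -> h w = 0 -> orth g (Defs.Im f) w.
Proof.
case: f_adm => [[Kdec _] [Mdec _]] [hK hM].
have [_ [w' [[u ->] w'_orth ->]]] := Mdec w; have [a [b [fa b_orth ->]]] := Kdec u.
rewrite !linearD fa linear0 hK // hM // !add0r addr0 => ->.
by rewrite linear0 add0r.
Qed.

Lemma MP_inverse_fixed (h : {linear V -> V}) v :
  is_MP_inverse g f h -> h (f v) = v -> orth g (Ker f) v.
Proof.
case: f_adm => [[Kdec _] _] [hK _].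
have [a [b [fa b_orth ->]]] := Kdec v.
rewrite linearD fa add0r hK // => /(congr1 (fun y => y - b)).
by rewrite subrr addrK => <-; rewrite add0r.
Qed.

Lemma MP_inverse_unique (h h' : {linear V -> V}) :
  is_MP_inverse g f h -> is_MP_inverse g f h' -> h =1 h'.
Proof.
case: f_adm => [[Kdec _] [Mdec _]] [hK hM] [h'K h'M] x.
have [_ [w [[u ->] w_orth ->]]] := Mdec x; have [a [b [fa b_orth ->]]] := Kdec u.
by rewrite !linearD fa !linear0 hK // h'K // hM // h'M.
Qed.

End MoorePenrose.

Section AssociatedInverse.
Variables (k : numFieldType) (conj : {rmorphism k -> k}) (V : lmodType k).
Variables (g : V -> V -> k) (f fplus : {linear V -> V}).
Variables (I : Type) (H : I -> V -> Prop).
Hypotheses (hg : inner_product conj g) (f_adm : MP_admissible g f).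
Hypotheses (H_sub : forall i, subspace (H i)) (H_fd : forall i, fin_dim (H i)).
Hypotheses (H_inv : forall i, Defs.invariant f (H i)) (H_sum : direct_sum_family H).
Hypothesis fplus_assoc : is_assoc_inverse g f fplus H.

Lemma assoc_inverse_orth_Im :
  orth_compatible g H (fun j => Im_on f (H j)) ->
  forall w, orth g (Defs.Im f) w -> fplus w = 0.
Proof.
move=> Im_orth w; have [s [x [Hx ->]]] := H_sum.1 w => w_orth.
have Im_H j : included (Im_on f (H j)) (H j) by move=> _ [u [Hu ->]]; apply: H_inv.
have Im_Im j : included (Im_on f (H j)) (Defs.Im f) by move=> _ [u [_ ->]]; exists u.
have [b [b_orth ->]] := orth_sum_components hg H_sub H_fd
  (fun j => Im_on_subspace f (H_sub j)) Im_H Im_orth (Im_subspace f) Im_Im Hx w_orth.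
by rewrite linear_sum big1 // => j _; apply: (fplus_assoc j).2.
Qed.

Lemma assoc_inverse_orth_Ker :
  orth_compatible g H (fun j => Ker_on f (H j)) ->
  forall v, orth g (Ker f) v -> fplus (f v) = v.
Proof.
move=> Ker_orth v; have [s [x [Hx ->]]] := H_sum.1 v => v_orth.
have Ker_H j : included (Ker_on f (H j)) (H j) by move=> u [].
have Ker_Ker j : included (Ker_on f (H j)) (Ker f) by move=> u [].
have [b [b_orth ->]] := orth_sum_components hg H_sub H_fd
  (fun j => Ker_on_subspace f (H_sub j)) Ker_H Ker_orth (Ker_subspace f) Ker_Ker Hx v_orth.
by rewrite !linear_sum; apply: eq_bigr => j _; apply: (fplus_assoc j).1.
Qed.

Lemma assoc_inverse_MP_iff : is_MP_inverse g f fplus <->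
  orth_compatible g H (fun j => Im_on f (H j)) /\
  orth_compatible g H (fun j => Ker_on f (H j)).
Proof.
split=> [fplus_MP | [Im_orth Ker_orth]]; last first.
  by split; [apply: assoc_inverse_orth_Ker | apply: assoc_inverse_orth_Im].
split=> i q q_orth; apply/(orth_sum_exceptP hg) => j _ u.
  have /(MP_inverse_eq0 f_adm fplus_MP) : fplus q = 0 by apply: (fplus_assoc i).2.
  by move=> q_orthIm [v [_ ->]]; apply: q_orthIm; exists v.
have /(MP_inverse_fixed f_adm fplus_MP) : fplus (f q) = q by apply: (fplus_assoc i).1.
by move=> q_orthKer [_ fu]; apply: q_orthKer.
Qed.

End AssociatedInverse.

Lemma Theorem_3_20_over_rmorphism (k : numFieldType) (conj : {rmorphism k -> k}) :
  Theorem_3_20_over conj.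
Proof.
move=> V g f I H fdag fplus hg f_adm H_sub H_fd H_inv H_sum fdag_MP fplus_assoc.
rewrite -(assoc_inverse_MP_iff hg f_adm H_sub H_fd H_inv H_sum fplus_assoc).
split=> [fplus_fdag | fplus_MP]; last exact: (MP_inverse_unique f_adm fplus_MP fdag_MP).
case: fdag_MP => fK fM.
by split=> [v v_orth | w w_orth]; rewrite fplus_fdag; [apply: fK | apply: fM].
Qed.

Theorem theorem3p20 (R : realType) :
  @Theorem_3_20_over (R : numFieldType) idfun /\
  @Theorem_3_20_over (R[i] : numFieldType) Num.conj.
Proof.
split.
  exact (@Theorem_3_20_over_rmorphism _ (idfun : {rmorphism R -> R})).
exact (@Theorem_3_20_over_rmorphism _ (Num.conj : {rmorphism R[i] -> R[i]})).
Qed.
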